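(* Let $P$ be a saturated toric sharp monoid with minimal free resolution $i:P\rightarrow F$. If $P_0$ is a face of $P$ and $F_0$ is the face of $F$ generated by $i(P_0)$, then the induced morphism $P/P_0\rightarrow F/F_0$ is a minimal free resolution.
   Context: A saturated toric sharp monoid is a finitely generated, integral, saturated monoid with no nontrivial units whose groupification is torsion-free. For such $P$, let $C(P)\subset P^{gp}\otimes\mathbb{Q}$ be the cone generated by $P$ and $d$ the number of extremal rays of the dual cone $C(P)^{\vee}$. A morphism $f:P\to Q$ of integral monoids is exact if $P=(f^{gp})^{-1}(Q)$ inside $P^{gp}$. A morphism $i:P\rightarrow F$ to a free monoid of rank $d$ is a minimal free resolution if it is exact and for every exact morphism $i':P\rightarrow F'$ to a free monoid $F'$ of rank $d$ there is a unique morphism $j:F\rightarrow F'$ with $i'=j\circ i$. A face of a monoid $Q$ is a submonoid $H$ such that $a+b\in H$ implies $a,b\in H$; the face generated by a subset is the smallest face containing it; $Q/H$ denotes the quotient monoid. *)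

From HB Require Import structures.
From mathcomp Require Import all_boot all_order all_algebra generic_quotient.
From mathcomp Require Import boolp.
Set Implicit Arguments. Unset Strict Implicit. Unset Printing Implicit Defensive.
Import Order.TTheory GRing.Theory Num.Theory.
Local Open Scope ring_scope.
Local Open Scope quotient_scope.

(* Commutative monoids are MathComp nmodTypes (written additively).
   Predicates on monoids are Prop-valued functions P -> Prop. *)

Section MonoidNotions.
Variable P : nmodType.

Definition integral_monoid := forall a b c : P, a + c = b + c -> a = b.

Definition fin_gen_monoid :=
  exists s : seq P, forall x : P,
    exists c : 'I_(size s) -> nat, x = \sum_(k < size s) s`_k *+ c k.

Definition sharp_monoid := forall a b : P, a + b = 0 -> a = 0.

(* Elements of P^gp are written a - b (a, b in P); in P^gp,
   a - b = c - d iff exists r, a + d + r = c + b + r (Grothendieck).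
   saturated: n (a - b) in P with n >= 1 implies a - b in P. *)
Definition saturated_monoid :=
  forall (n : nat) (a b : P), (0 < n)%N ->
    (exists c r : P, a *+ n + r = b *+ n + c + r) ->
    exists c r : P, a + r = b + c + r.

(* P^gp torsion-free: n (a - b) = 0 with n >= 1 implies a - b = 0. *)
Definition gp_torsion_free :=
  forall (n : nat) (a b : P), (0 < n)%N ->
    (exists r : P, a *+ n + r = b *+ n + r) -> exists r : P, a + r = b + r.

Definition saturated_toric_sharp :=
  [/\ fin_gen_monoid, integral_monoid, saturated_monoid, sharp_monoid
    & gp_torsion_free].

(* The dual cone C(P)^v inside Hom(P^gp (x) Q, Q): its elements are exactly
   the monoid morphisms P -> Q taking nonnegative values on P. *)
Definition dual_cone_elt (phi : P -> rat) :=
  [/\ phi 0 = 0, (forall a b, phi (a + b) = phi a + phi b)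
    & forall a, 0 <= phi a].

Definition extremal_dual (phi : P -> rat) :=
  [/\ dual_cone_elt phi, (exists x, phi x != 0)
    & forall psi1 psi2 : P -> rat, dual_cone_elt psi1 -> dual_cone_elt psi2 ->
        (forall x, phi x = psi1 x + psi2 x) ->
        exists r : rat, 0 <= r /\ forall x, psi1 x = r * phi x].

Definition same_ray (phi psi : P -> rat) :=
  exists r : rat, 0 < r /\ forall x, phi x = r * psi x.

Definition num_dual_rays (d : nat) :=
  exists phis : 'I_d -> P -> rat,
    [/\ forall k, extremal_dual (phis k),
        forall k l, same_ray (phis k) (phis l) -> k = l
      & forall phi, extremal_dual phi -> exists k, same_ray phi (phis k)].

Definition submonoid (H : P -> Prop) :=
  H 0 /\ forall a b, H a -> H b -> H (a + b).

Definition is_face (H : P -> Prop) :=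
  submonoid H /\ forall a b, H (a + b) -> H a /\ H b.

Definition face_gen (S : P -> Prop) : P -> Prop :=
  fun x => forall H, is_face H -> (forall y, S y -> H y) -> H x.

Definition submon_gen (S : P -> Prop) : P -> Prop :=
  fun x => forall H, submonoid H -> (forall y, S y -> H y) -> H x.

End MonoidNotions.

Definition monoid_morph (P Q : nmodType) (f : P -> Q) :=
  f 0 = 0 /\ forall a b, f (a + b) = f a + f b.

Definition mimage (P Q : nmodType) (f : P -> Q) (S : P -> Prop) : Q -> Prop :=
  fun y => exists2 x, S x & y = f x.

(* f : P -> Q is exact: P = (f^gp)^-1(Q) in P^gp, unfolded via the
   Grothendieck description of P^gp and Q^gp:  if f a - f b lies in Q
   then a - b lies in P. *)
Definition exact_morph (P Q : nmodType) (f : P -> Q) :=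
  forall a b : P, (exists q r : Q, f a + r = f b + q + r) ->
    exists p r : P, a + r = b + p + r.

Definition free_of_rank (F : nmodType) (d : nat) :=
  exists e : 'I_d -> F,
    (forall x : F, exists c : 'I_d -> nat, x = \sum_k e k *+ c k) /\
    (forall c c' : 'I_d -> nat,
        \sum_k e k *+ c k = \sum_k e k *+ c' k -> forall k, c k = c' k).

Definition min_free_res (P F : nmodType) (i : P -> F) :=
  exists d : nat,
    [/\ num_dual_rays P d, free_of_rank F d, monoid_morph i, exact_morph i
      & forall (F' : nmodType) (i' : P -> F'),
          free_of_rank F' d -> monoid_morph i' -> exact_morph i' ->
          exists j : F -> F',
            [/\ monoid_morph j, (forall x, i' x = j (i x))
              & forall j' : F -> F', monoid_morph j' ->
                  (forall x, i' x = j' (i x)) -> forall y, j' y = j y]].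

(* P/H is the quotient of P by the congruence a ~ b iff a + h1 = b + h2 for
   some h1, h2 in H (H is replaced by the submonoid it generates, which
   is H itself when H is a face). *)
Section Quotient.
Variables (P : nmodType) (H : P -> Prop).

Definition qrel_b (a b : P) : bool :=
  `[< exists h1 h2, [/\ submon_gen H h1, submon_gen H h2 & a + h1 = b + h2] >].

Lemma smg0 : submon_gen H 0.
Proof. by move=> K [] . Qed.

Lemma smgD a b : submon_gen H a -> submon_gen H b -> submon_gen H (a + b).
Proof. by move=> ha hb K hK hS; case: (hK) => _ hD; apply: hD; [apply: ha|apply: hb]. Qed.

Lemma qrel_refl : reflexive qrel_b.
Proof. by move=> a; apply/asboolP; exists 0, 0; split => //; exact: smg0. Qed.

Lemma qrel_sym : symmetric qrel_b.
Proof.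
move=> a b; apply/asboolP/asboolP => -[h1 [h2 [? ? e]]]; exists h2, h1; by split.
Qed.

Lemma qrel_trans : transitive qrel_b.
Proof.
move=> b a c /asboolP [h1 [h2 [s1 s2 e1]]] /asboolP [h3 [h4 [s3 s4 e2]]].
apply/asboolP; exists (h1 + h3), (h4 + h2); split; try exact: smgD.
by rewrite addrA e1 addrAC e2 addrA.
Qed.

Definition qrel := EquivRel qrel_b qrel_refl qrel_sym qrel_trans.

Definition quotM := {eq_quot qrel}.
HB.instance Definition _ := Choice.on quotM.


Lemma qrelDr a a' b : qrel_b a a' -> qrel_b (a + b) (a' + b).
Proof.
move=> /asboolP [h1 [h2 [s1 s2 e]]]; apply/asboolP; exists h1, h2; split => //.
by rewrite addrAC e addrAC.
Qed.

Lemma qpiP (a b : P) : qrel_b a b -> (\pi_quotM a) = \pi_quotM b.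
Proof. by move=> h; apply/eqmodP; exact: h. Qed.

Lemma qpi_repr (a : P) : qrel_b (repr (\pi_quotM a)) a.
Proof. change (qrel (repr (\pi_quotM a)) a); apply/eqmodP; by rewrite reprK. Qed.

Definition qzero : quotM := \pi_quotM 0.
Definition qadd (x y : quotM) : quotM := \pi_quotM (repr x + repr y).

Lemma qaddA : associative qadd.
Proof.
move=> x y z; rewrite /qadd; apply: qpiP.
apply: (qrel_trans (y := repr x + repr y + repr z)).
  rewrite -addrA [repr x + _]addrC [repr x + (_ + _)]addrC qrel_sym.
  apply: qrelDr; rewrite qrel_sym; exact: qpi_repr.
apply: qrelDr; rewrite qrel_sym; exact: qpi_repr.
Qed.

Lemma qaddC : commutative qadd.
Proof. by move=> x y; rewrite /qadd addrC. Qed.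

Lemma qadd0 : left_id qzero qadd.
Proof.
move=> x; rewrite /qadd -{2}[x]reprK; apply: qpiP.
rewrite -{2}[repr x]add0r; apply: qrelDr; exact: qpi_repr.
Qed.

HB.instance Definition _ := GRing.isNmodule.Build quotM qaddA qaddC qadd0.

End Quotient.

(* the morphism P/H -> F/K induced by i : P -> F (when i(H) lands in K) *)
Definition quot_map (P F : nmodType) (i : P -> F) (H : P -> Prop)
  (K : F -> Prop) : quotM H -> quotM K :=
  fun x => \pi_(quotM K) (i (repr x)).
Arguments quot_map {P F} i H K _.

From mathcomp Require Import all_boot all_order all_algebra generic_quotient.
From mathcomp Require Import boolp ring.
Set Implicit Arguments. Unset Strict Implicit. Unset Printing Implicit Defensive.
Import Order.TTheory GRing.Theory Num.Theory.
Local Open Scope ring_scope.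
Local Open Scope quotient_scope.

(* Restricted to P, the coordinate functionals of F = N^d lie in the dual cone
   C(P)^v, and exactness of i, read through Farkas' lemma, says that they
   generate it. Hence every extremal ray is a coordinate functional, and as
   there are exactly d rays, the d coordinate functionals are the extremal
   rays, pairwise non-proportional.
   Let S be the set of coordinates that do not vanish on P0. The face F0 is
   then the set of elements of F supported on S, so F/F0 is free on the
   coordinates outside S, and these are exactly the extremal rays of
   C(P/P0)^v. Exactness of P/P0 -> F/F0 follows from that of i after
   translating by a multiple of an element of P0 positive on all of S.
   Finally, an exact map P/P0 -> F' to a free monoid of rank d - |S|,
   extended by the S-coordinates, is an exact map P -> F' x N^S into a free
   monoid of rank d; its factorization through F kills F0, hence descends to
   F/F0. *)

(** * Farkas' lemma *)

Section Farkas.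
Variables (R : realFieldType) (m : nat).

Definition dot (u v : 'rV[R]_m) : R := \sum_j u 0 j * v 0 j.

Lemma dotC u v : dot u v = dot v u.
Proof. by apply: eq_bigr => j _; rewrite mulrC. Qed.

Lemma dotDl u1 u2 v : dot (u1 + u2) v = dot u1 v + dot u2 v.
Proof. by rewrite /dot -big_split; apply: eq_bigr => j _; rewrite mxE mulrDl. Qed.

Lemma dotZl a u v : dot (a *: u) v = a * dot u v.
Proof. by rewrite /dot mulr_sumr; apply: eq_bigr => j _; rewrite mxE mulrA. Qed.

Lemma dotNl u v : dot (- u) v = - dot u v.
Proof. by rewrite -scaleN1r dotZl mulN1r. Qed.

Lemma dotBl u1 u2 v : dot (u1 - u2) v = dot u1 v - dot u2 v.
Proof. by rewrite dotDl dotNl. Qed.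

Lemma dotZr a u v : dot u (a *: v) = a * dot u v.
Proof. by rewrite !(dotC u) dotZl. Qed.

Lemma dotBr u v1 v2 : dot u (v1 - v2) = dot u v1 - dot u v2.
Proof. by rewrite !(dotC u) dotBl. Qed.

Lemma dotNr u v : dot u (- v) = - dot u v.
Proof. by rewrite !(dotC u) dotNl. Qed.

Definition cone n (A : 'I_n -> 'rV[R]_m) b :=
  exists2 lam : 'I_n -> R, forall k, 0 <= lam k & b = \sum_k lam k *: A k.

Lemma cone_tail n (A : 'I_n.+1 -> 'rV[R]_m) b :
  cone (fun k => A (lift ord0 k)) b -> cone A b.
Proof.
move=> [lam lam0 ->].
exists (fun k => if unlift ord0 k is Some k' then lam k' else 0).
  by move=> k; case: (unlift ord0 k).
rewrite big_ord_recl /= unlift_none scale0r add0r.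
by apply: eq_bigr => k _; rewrite liftK.
Qed.

(* Fourier-Motzkin elimination of the first generator [a] along a direction
   [z] with [dot a z < 0]. *)
Lemma cone_eliminate n (A : 'I_n.+1 -> 'rV[R]_m) b z :
  let a := A ord0 in let al := dot a z in
  al < 0 -> dot b z <= 0 -> (forall k, 0 <= dot (A (lift ord0 k)) z) ->
  cone (fun k => al *: A (lift ord0 k) - dot (A (lift ord0 k)) z *: a)
       (al *: b - dot b z *: a) ->
  cone A b.
Proof.
move=> a al al0 bz Rz [mu mu0 eb].
set Sr := \sum_k mu k *: A (lift ord0 k).
set Sz := \sum_k mu k * dot (A (lift ord0 k)) z.
have eS : \sum_k mu k *: (al *: A (lift ord0 k) - dot (A (lift ord0 k)) z *: a)
          = al *: Sr - Sz *: a.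
  rewrite /Sr /Sz scaler_sumr scaler_suml -sumrB; apply: eq_bigr => k _.
  by rewrite scalerBr !scalerA mulrC.
have alnz : al != 0 by rewrite lt_eqF.
pose t := (dot b z - Sz) / al.
have t0 : 0 <= t.
  rewrite /t ler_ndivlMr // mul0r subr_le0 (le_trans bz) //.
  by apply: sumr_ge0 => k _; apply: mulr_ge0.
exists (fun k => if unlift ord0 k is Some k' then mu k' else t).
  by move=> k; case: (unlift ord0 k).
rewrite big_ord_recl /= unlift_none.
under eq_bigr => k _ do rewrite liftK.
apply: (@scalerI _ _ al) => //.
rewrite scalerDr scalerA /t mulrC divfK // -/Sr.
move: eb; rewrite eS => /eqP; rewrite subr_eq => /eqP ->.
by rewrite scalerBl -addrA (addrC (- _)) addrC.
Qed.

Lemma farkas_separation n (A : 'I_n -> 'rV[R]_m) b : ~ cone A b ->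
  exists z, (forall k, 0 <= dot (A k) z) /\ dot b z < 0.
Proof.
elim: n A b => [|n IH] A b ncone.
  have [j bj] : exists j, b 0 j != 0.
    apply: contrapT => hn; apply: ncone; exists (fun=> 0) => //.
    rewrite big_ord0; apply/matrixP => i j; rewrite (ord1 i) !mxE.
    by apply: contrapT => /eqP bij; apply: hn; exists j.
  exists (- b); split; first by case.
  rewrite dotNr oppr_lt0 /dot (bigD1 j) //=.
  apply: ltr_pwDl; first by rewrite -expr2 exprn_even_gt0.
  by apply: sumr_ge0 => i _; rewrite -expr2 sqr_ge0.
have [z [Rz bz]] := IH _ b (fun h => ncone (cone_tail h)).
have liftP (Q : 'I_n.+1 -> Prop) : Q ord0 -> (forall k, Q (lift ord0 k)) -> forall k, Q k.
  by move=> Q0 QS k; case: (unliftP ord0 k) => [k' ->|->].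
have [az|az] := lerP 0 (dot (A ord0) z); first by exists z; split => //; apply: liftP.
have [w [R'w b'w]] := IH _ _ (fun h => ncone (cone_eliminate az (ltW bz) Rz h)).
exists (dot (A ord0) z *: w - dot (A ord0) w *: z); split.
  apply: liftP => [|k]; first by rewrite dotBr !dotZr [_ * dot _ w]mulrC subrr.
  move: (R'w k).
  by rewrite dotBr !dotZr dotBl !dotZl (mulrC (dot (A (lift ord0 k)) z)).
by move: b'w; rewrite dotBr !dotZr dotBl !dotZl (mulrC (dot b z)).
Qed.

Lemma farkas n (A : 'I_n -> 'rV[R]_m) b :
  (forall z, (forall k, 0 <= dot (A k) z) -> 0 <= dot b z) -> cone A b.
Proof.
move=> H; apply: contrapT => /farkas_separation [z [Az bz]].
by move: (H z Az); rewrite leNgt bz.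
Qed.

End Farkas.

Lemma rat_row_clear_denoms m (z : 'rV[rat]_m) :
  exists2 N : int, 0 < N &
    exists p n : 'I_m -> nat, forall j, (p j)%:R - (n j)%:R = N%:~R * z 0 j.
Proof.
pose N : int := \prod_j denq (z 0 j).
exists N; first by apply: prodr_gt0 => j _; exact: denq_gt0.
have int_diff j : exists pn : nat * nat, pn.1%:R - pn.2%:R = N%:~R * z 0 j.
  pose w : int := (\prod_(l | l != j) denq (z 0 l)) * numq (z 0 j).
  have -> : N%:~R * z 0 j = w%:~R :> rat.
    by rewrite /N (bigD1 j) //= /w !rmorphM /= numqE; ring.
  by case: w => [p|q]; [exists (p, 0%N) | exists (0%N, q.+1)];
    rewrite /= ?subr0 ?sub0r ?NegzE ?mulrNz.
have [pn hpn] := fin_all_exists int_diff.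
by exists (fun j => (pn j).1), (fun j => (pn j).2).
Qed.

(** * Free commutative monoids *)

Section FreeBasis.
Variables (F : nmodType) (d : nat) (e : 'I_d -> F).

Definition free_basis :=
  (forall x : F, exists c : 'I_d -> nat, x = \sum_k e k *+ c k) /\
  (forall c c' : 'I_d -> nat,
      \sum_k e k *+ c k = \sum_k e k *+ c' k -> forall k, c k = c' k).

Hypothesis he : free_basis.

Definition fcoord (x : F) : 'I_d -> nat := sval (cid (he.1 x)).

Lemma fcoordE x : x = \sum_k e k *+ fcoord x k.
Proof. by rewrite /fcoord; case: cid. Qed.

Lemma fcoord_comb c k : fcoord (\sum_l e l *+ c l) k = c k.
Proof. by apply: he.2; rewrite -fcoordE. Qed.

Lemma fcoord_inj x y : (forall k, fcoord x k = fcoord y k) -> x = y.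
Proof.
by move=> h; rewrite (fcoordE x) (fcoordE y); apply: eq_bigr => k _; rewrite h.
Qed.

Lemma fcoordD x y k : fcoord (x + y) k = (fcoord x k + fcoord y k)%N.
Proof.
rewrite {1}(fcoordE x) {1}(fcoordE y) -big_split /=.
under eq_bigr => l _ do rewrite -mulrnDr.
exact: fcoord_comb.
Qed.

Lemma fcoord0 k : fcoord 0 k = 0%N.
Proof.
rewrite -(fcoord_comb (fun=> 0%N) k); congr fcoord.
by rewrite big1 // => l _; rewrite mulr0n.
Qed.

Lemma fcoordMn x n k : fcoord (x *+ n) k = (fcoord x k * n)%N.
Proof.
by elim: n => [|n IH]; rewrite ?mulr0n ?fcoord0 ?muln0 // mulrS fcoordD IH mulnS.
Qed.

Lemma fcoord_sum (I : Type) (r : seq I) (Pr : pred I) (f : I -> F) k :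
  fcoord (\sum_(j <- r | Pr j) f j) k = (\sum_(j <- r | Pr j) fcoord (f j) k)%N.
Proof. exact: (big_morph (fcoord^~ k) (fun x y => fcoordD x y k) (fcoord0 k)). Qed.

Lemma fcoord_basis l k : fcoord (e l) k = (k == l).
Proof.
rewrite -(fcoord_comb (fun j => nat_of_bool (j == l)) k); congr fcoord.
rewrite (bigD1 l) //= eqxx mulr1n big1 ?addr0 // => j /negbTE ->; exact: mulr0n.
Qed.

Lemma fcoord_le_decomp x y : (forall k, fcoord y k <= fcoord x k)%N ->
  x = y + \sum_k e k *+ (fcoord x k - fcoord y k)%N.
Proof. by move=> h; apply: fcoord_inj => k; rewrite fcoordD fcoord_comb subnKC. Qed.

Lemma free_sharp : sharp_monoid F.
Proof.
move=> x y /(congr1 (fcoord^~ _)) xy0; apply: fcoord_inj => k.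
by move/eqP: (xy0 k); rewrite fcoordD !fcoord0 addn_eq0 => /andP [/eqP ->].
Qed.

End FreeBasis.

Lemma monoid_morph_comp (T G H : nmodType) (f : T -> G) (g : G -> H) :
  monoid_morph f -> monoid_morph g -> monoid_morph (fun x => g (f x)).
Proof. by move=> [f0 fD] [g0 gD]; split => [|a b] /=; rewrite ?f0 ?g0 ?fD ?gD. Qed.

Lemma monoid_morph_pair (T G H : nmodType) (f : T -> G) (g : T -> H) :
  monoid_morph f -> monoid_morph g -> monoid_morph (fun x => (f x, g x)).
Proof. by move=> [f0 fD] [g0 gD]; split => [|a b]; rewrite ?f0 ?g0 ?fD ?gD. Qed.

Lemma fcoord_ffun_morph (F : nmodType) d (e : 'I_d -> F) (he : free_basis e)
    n (f : 'I_n -> 'I_d) :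
  monoid_morph (fun y => [ffun l => fcoord he y (f l)]).
Proof.
by split => [|a b]; apply/ffunP => l; rewrite !ffunE ?fcoord0 ?fcoordD.
Qed.

Section FreeProduct.
Variables (F : nmodType) (n1 n2 : nat).
Local Notation G := (F * {ffun 'I_n2 -> nat})%type.

Definition ffun_delta (l : 'I_n2) : {ffun 'I_n2 -> nat} := [ffun l' => nat_of_bool (l' == l)].

Lemma ffun_delta_comb (c : 'I_n2 -> nat) l : (\sum_l' ffun_delta l' *+ c l') l = c l.
Proof.
rewrite sum_ffunE (bigD1 l) //= ffunMnE ffunE eqxx big1 ?addr0 ?natn //.
by move=> l' hl'; rewrite ffunMnE ffunE eq_sym (negbTE hl') mul0rn.
Qed.

Lemma pair_sum (I : Type) (r : seq I) (Pr : pred I) (f : I -> F) (g : I -> {ffun 'I_n2 -> nat}) :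
  \sum_(j <- r | Pr j) ((f j, g j) : G) = (\sum_(j <- r | Pr j) f j, \sum_(j <- r | Pr j) g j).
Proof.
rewrite [LHS]surjective_pairing.
by rewrite (big_morph fst (fun _ _ => erefl) erefl) (big_morph snd (fun _ _ => erefl) erefl).
Qed.

Lemma pair_mulrn (x : G) n : x *+ n = (x.1 *+ n, x.2 *+ n).
Proof. by elim: n => [|n IH] //; rewrite !mulrS IH. Qed.

Lemma free_of_rank_prod : free_of_rank F n1 -> free_of_rank G (n1 + n2).
Proof.
move=> [e he].
have split_lshift j : split (lshift n2 j) = inl j := unsplitK (inl j).
have split_rshift l : split (rshift n1 l) = inr l := unsplitK (inr l).
pose eG k : G := match split k with inl j => (e j, 0) | inr l => (0, ffun_delta l) end.
have sumG c : \sum_k eG k *+ c k =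
    (\sum_j e j *+ c (lshift n2 j), \sum_l ffun_delta l *+ c (rshift n1 l)).
  rewrite big_split_ord /= /eG.
  under eq_bigr => j _ do rewrite split_lshift pair_mulrn /=.
  under [X in _ + X]eq_bigr => l _ do rewrite split_rshift pair_mulrn /=.
  rewrite !pair_sum; congr (_, _) => /=.
    by rewrite [X in _ + X]big1 ?addr0 // => l _; rewrite mul0rn.
  by rewrite big1 ?add0r // => j _; rewrite mul0rn.
exists eG; split.
  move=> [x y]; exists (fun k => match split k with
                                | inl j => fcoord he x j | inr l => y l end).
  rewrite sumG; congr (_, _).
    by rewrite {1}(fcoordE he x); apply: eq_bigr => j _; rewrite split_lshift.
  by apply/ffunP => l; rewrite ffun_delta_comb split_rshift.
move=> c c'; rewrite !sumG => -[/he.2 E1 /ffunP E2] k.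
rewrite -(splitK k); case: (split k) => [j|l] /=; first exact: E1.
by have := E2 l; rewrite !ffun_delta_comb.
Qed.

End FreeProduct.

(** * Faces, quotients and dual cones *)

Section Faces.
Variable T : nmodType.

Lemma face_gen_face (S : T -> Prop) : is_face (face_gen S).
Proof.
split; first split.
- by move=> K [[K0 _] _].
- by move=> a b ha hb K hK hS; apply: hK.1.2; [apply: ha|apply: hb].
- by move=> a b hab; split => K hK hS; have [] := hK.2 a b (hab K hK hS).
Qed.

Lemma face_gen_sub (S : T -> Prop) x : S x -> face_gen S x.
Proof. by move=> Sx K _; apply. Qed.

Lemma submonoid_mulrn (K : T -> Prop) x n : submonoid K -> K x -> K (x *+ n).
Proof. by move=> [K0 KD] Kx; elim: n => [|n IH]; rewrite ?mulr0n ?mulrS //; apply: KD. Qed.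

Lemma submonoid_sum (K : T -> Prop) (I : Type) (r : seq I) (Pr : pred I) (f : I -> T) :
  submonoid K -> (forall j, Pr j -> K (f j)) -> K (\sum_(j <- r | Pr j) f j).
Proof. by move=> [K0 KD] h; apply: big_ind. Qed.

Lemma submon_gen_id (H : T -> Prop) x : submonoid H -> submon_gen H x <-> H x.
Proof. by move=> hH; split => [|Hx K _]; [apply|apply]. Qed.

Lemma kernel_face (G : nmodType) (g : T -> G) :
  sharp_monoid G -> monoid_morph g -> is_face (fun y => g y = 0).
Proof.
move=> shG [g0 gD]; split; first by split => // a b ha hb; rewrite gD ha hb addr0.
move=> a b; rewrite gD => hab; split; first exact: shG hab.
by rewrite addrC in hab; exact: shG hab.
Qed.

End Faces.

Section QuotientMonoid.
Variables (T : nmodType) (H : T -> Prop).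
Hypothesis hH : submonoid H.

Definition qpi (a : T) : quotM H := \pi_(quotM H) a.

Lemma qpi_eqP a b : qpi a = qpi b <-> exists h1 h2, [/\ H h1, H h2 & a + h1 = b + h2].
Proof.
split.
  move/eqmodP => /asboolP [h1 [h2 [s1 s2 e]]].
  by exists h1, h2; split => //; apply/(submon_gen_id _ hH).
move=> [h1 [h2 [s1 s2 e]]]; apply: qpiP; apply/asboolP.
by exists h1, h2; split => //; apply/(submon_gen_id _ hH).
Qed.

Lemma qpi0 : qpi 0 = 0. Proof. by []. Qed.

Lemma qpiD a b : qpi (a + b) = qpi a + qpi b.
Proof.
rewrite [qpi a + qpi b]/(_ + _) /= /qadd /qpi; apply: qpiP.
apply: (qrel_trans (y := repr (qpi a) + b)).
  by apply: qrelDr; rewrite qrel_sym; apply: qpi_repr.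
rewrite [repr (qpi a) + b]addrC [repr (qpi a) + repr _]addrC.
by apply: qrelDr; rewrite qrel_sym; apply: qpi_repr.
Qed.

Lemma qpi_morph : monoid_morph qpi.
Proof. by split; [exact: qpi0 | exact: qpiD]. Qed.

Lemma qpi_sum (I : Type) (r : seq I) (Pr : pred I) (f : I -> T) :
  qpi (\sum_(j <- r | Pr j) f j) = \sum_(j <- r | Pr j) qpi (f j).
Proof. exact: (big_morph qpi qpiD qpi0). Qed.

Lemma qpiMn x n : qpi (x *+ n) = qpi x *+ n.
Proof. by elim: n => [|n IH]; rewrite ?mulr0n ?mulrS ?qpiD ?IH. Qed.

Lemma qpi_null h : H h -> qpi h = 0.
Proof. by move=> Hh; apply/qpi_eqP; exists 0, h; split; rewrite ?add0r ?addr0 //; case: hH. Qed.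

Lemma qpi_surj (x : quotM H) : exists a, x = qpi a.
Proof. by exists (repr x); rewrite /qpi reprK. Qed.

Section Descent.
Variables (G : nmodType) (g : T -> G).
Hypotheses (gmorph : monoid_morph g) (gH : forall h, H h -> g h = 0).

Lemma descent_qpi a : g (repr (qpi a)) = g a.
Proof.
have /qpi_eqP [h1 [h2 [s1 s2 e]]] : qpi (repr (qpi a)) = qpi a by rewrite /qpi reprK.
by move/(congr1 g): e; rewrite !gmorph.2 (gH s1) (gH s2) !addr0.
Qed.

Lemma descent_morph : monoid_morph (fun x : quotM H => g (repr x)).
Proof.
split; first by rewrite -qpi0 descent_qpi gmorph.1.
move=> x y; have [a ->] := qpi_surj x; have [b ->] := qpi_surj y.
by rewrite -qpiD !descent_qpi gmorph.2.
Qed.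

End Descent.
End QuotientMonoid.

Section DualCone.
Variable T : nmodType.

Lemma dual_morph (phi : T -> rat) : dual_cone_elt phi -> monoid_morph phi.
Proof. by case. Qed.

Lemma dual_sum (phi : T -> rat) (I : Type) (r : seq I) (Pr : pred I) f :
  dual_cone_elt phi -> phi (\sum_(j <- r | Pr j) f j) = \sum_(j <- r | Pr j) phi (f j).
Proof. by move=> [h0 hD _]; apply: (big_morph phi hD h0). Qed.

Lemma dual_mulrn (phi : T -> rat) x n : dual_cone_elt phi -> phi (x *+ n) = phi x * n%:R.
Proof.
move=> [h0 hD _]; rewrite mulr_natr.
by elim: n => [|n IH]; rewrite ?mulr0n ?h0 // !mulrS hD IH.
Qed.

Lemma dual_comb_diff (phi : T -> rat) m (s : 'I_m -> T) (p n : 'I_m -> nat) :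
  dual_cone_elt phi ->
  phi (\sum_j s j *+ p j) - phi (\sum_j s j *+ n j) = \sum_j phi (s j) * ((p j)%:R - (n j)%:R).
Proof.
move=> hphi; rewrite !dual_sum // -sumrB; apply: eq_bigr => j _.
by rewrite !dual_mulrn // mulrBr.
Qed.

Lemma dual_scale (phi : T -> rat) r :
  0 <= r -> dual_cone_elt phi -> dual_cone_elt (fun x => r * phi x).
Proof.
move=> r0 [h0 hD hp]; split => [|a b|a]; first by rewrite h0 mulr0.
  by rewrite hD mulrDr.
exact: mulr_ge0.
Qed.

Lemma same_ray_sym (phi psi : T -> rat) : same_ray phi psi -> same_ray psi phi.
Proof.
move=> [r [r0 h]]; exists r^-1; split; first by rewrite invr_gt0.
by move=> x; rewrite h mulKf ?gt_eqF.
Qed.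

Lemma same_ray_trans (phi psi chi : T -> rat) :
  same_ray phi psi -> same_ray psi chi -> same_ray phi chi.
Proof.
move=> [r [r0 e1]] [s [s0 e2]]; exists (r * s); split; first exact: mulr_gt0.
by move=> x; rewrite e1 e2 mulrA.
Qed.

Lemma extremal_dual_same_ray (phi psi : T -> rat) :
  extremal_dual psi -> same_ray phi psi -> extremal_dual phi.
Proof.
move=> [hpsi [x psix] ext] [r [r0 e]].
have -> : phi = (fun x => r * psi x) by apply: funext => y; rewrite e.
have rV0 : 0 <= r^-1 by rewrite invr_ge0 ltW.
split; first exact: dual_scale (ltW r0) hpsi.
  by exists x; rewrite mulf_neq0 // gt_eqF.
move=> psi1 psi2 h1 h2 hs.
have [|t [t0 ht]] := ext _ _ (dual_scale rV0 h1) (dual_scale rV0 h2).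
  by move=> y; rewrite -mulrDr -hs /= mulKf // gt_eqF.
exists t; split => // y; move: (ht y) => /(congr1 (fun v => r * v)).
by rewrite mulVKf ?gt_eqF // => ->; exact: mulrCA.
Qed.

End DualCone.

Lemma dual_le_shift (T : nmodType) (phi : T -> rat) a b q r :
  dual_cone_elt phi -> a + r = b + q + r -> phi b <= phi a.
Proof.
move=> [_ hD hp] /(congr1 phi); rewrite !hD => /addIr ->.
by rewrite lerDl.
Qed.

Section QuotientDual.
Variables (T : nmodType) (H : T -> Prop).
Hypothesis hH : submonoid H.

Lemma dual_qpi (psi : quotM H -> rat) : dual_cone_elt psi -> dual_cone_elt (fun a => psi (qpi H a)).
Proof. by move=> [h0 hD hp]; split => [|a b|a] //=; rewrite qpiD. Qed.

Lemma dual_descent (phi : T -> rat) : dual_cone_elt phi -> (forall h, H h -> phi h = 0) ->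
  dual_cone_elt (fun x : quotM H => phi (repr x)).
Proof.
move=> hphi phiH; have [h0 hD] := descent_morph hH (dual_morph hphi) phiH.
by split => // x; case: hphi.
Qed.

Lemma extremal_dual_descent (phi : T -> rat) : extremal_dual phi ->
  (forall h, H h -> phi h = 0) -> extremal_dual (fun x : quotM H => phi (repr x)).
Proof.
move=> [hphi [x phix] ext] phiH.
have desc := descent_qpi hH (dual_morph hphi) phiH.
split; first exact: dual_descent.
  by exists (qpi H x); rewrite desc.
move=> psi1 psi2 h1 h2 hs.
have [|r [r0 hr]] := ext _ _ (dual_qpi h1) (dual_qpi h2).
  by move=> a; rewrite -desc hs.
by exists r; split => // y; have [a ->] := qpi_surj y; rewrite desc; exact: hr.
Qed.

Lemma extremal_dual_qpi (psi : quotM H -> rat) : extremal_dual psi -> extremal_dual (fun a => psi (qpi H a)).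
Proof.
move=> [hpsi [x psix] ext]; split; first exact: dual_qpi.
  by have [a ea] := qpi_surj x; exists a; rewrite -ea.
move=> f1 f2 d1 d2 /= hs.
have fH h : H h -> f1 h = 0 /\ f2 h = 0.
  move=> Hh; move: (hs h); rewrite qpi_null // (dual_morph hpsi).1 => /esym/eqP.
  case: d1 d2 => [_ _ p1] [_ _ p2].
  by rewrite paddr_eq0 // => /andP [/eqP -> /eqP ->].
have desc1 := descent_qpi hH (dual_morph d1) (fun h Hh => (fH h Hh).1).
have desc2 := descent_qpi hH (dual_morph d2) (fun h Hh => (fH h Hh).2).
have [|r [r0 hr]] := ext _ _ (dual_descent d1 (fun h Hh => (fH h Hh).1))
                           (dual_descent d2 (fun h Hh => (fH h Hh).2)).
  by move=> y; have [a ->] := qpi_surj y; rewrite desc1 desc2 hs.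
by exists r; split => // a; rewrite -desc1 hr.
Qed.

End QuotientDual.

(** * Exact maps into free monoids *)

Definition universal_exact (P F : nmodType) (i : P -> F) (d : nat) :=
  forall (F' : nmodType) (i' : P -> F'),
    free_of_rank F' d -> monoid_morph i' -> exact_morph i' ->
    exists j : F -> F',
      [/\ monoid_morph j, (forall x, i' x = j (i x))
        & forall j' : F -> F', monoid_morph j' ->
            (forall x, i' x = j' (i x)) -> forall y, j' y = j y].

Section ExactFreeResolution.
Variables (P F : nmodType) (i : P -> F) (d : nat) (e : 'I_d -> F).
Hypotheses (he : free_basis e) (imorph : monoid_morph i) (iexact : exact_morph i).

Definition icoord k x : nat := fcoord he (i x) k.

Definition coord_fun k x : rat := (icoord k x)%:R.

Lemma icoordD k a b : icoord k (a + b) = (icoord k a + icoord k b)%N.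
Proof. by rewrite /icoord imorph.2 fcoordD. Qed.

Lemma icoord0 k : icoord k 0 = 0%N.
Proof. by rewrite /icoord imorph.1 fcoord0. Qed.

Lemma icoord_sum (I : Type) (r : seq I) (Pr : pred I) (f : I -> P) k :
  icoord k (\sum_(j <- r | Pr j) f j) = (\sum_(j <- r | Pr j) icoord k (f j))%N.
Proof. exact: (big_morph (icoord k) (icoordD k) (icoord0 k)). Qed.

Lemma icoordMn k a n : icoord k (a *+ n) = (icoord k a * n)%N.
Proof. by elim: n => [|n IH]; rewrite ?mulr0n ?icoord0 ?muln0 // mulrS icoordD IH mulnS. Qed.

Lemma exact_icoord_le a b : (forall k, icoord k b <= icoord k a)%N ->
  exists p r, a + r = b + p + r.
Proof.
move=> h; apply: iexact; exists (\sum_k e k *+ (icoord k a - icoord k b)%N), 0.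
by rewrite !addr0; apply: fcoord_le_decomp.
Qed.

Lemma dual_coord_fun k : dual_cone_elt (coord_fun k).
Proof. by split => [|a b|a]; rewrite /coord_fun ?icoord0 ?icoordD ?natrD ?ler0n. Qed.

Definition gens_row m (s : 'I_m -> P) (f : P -> rat) : 'rV[rat]_m := \row_j f (s j).

(* A rational direction pairing nonnegatively with every coordinate row gives,
   after clearing denominators, points a, b of P with i b <= i a
   coordinatewise; exactness then puts a - b in P, where phi is nonnegative. *)
Lemma dual_gens_row_cone m (s : 'I_m -> P) phi : dual_cone_elt phi ->
  cone (fun k => gens_row s (coord_fun k)) (gens_row s phi).
Proof.
move=> hphi; apply: farkas => z Az.
have [N N0 [p [n hpn]]] := rat_row_clear_denoms z.
pose a := \sum_j s j *+ p j; pose b := \sum_j s j *+ n j.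
have diffE f : dual_cone_elt f -> f a - f b = N%:~R * dot (gens_row s f) z.
  move=> hf; rewrite dual_comb_diff // /dot mulr_sumr; apply: eq_bigr => j _.
  by rewrite hpn mxE mulrCA.
have [|q [r abqr]] := exact_icoord_le (a := a) (b := b).
  move=> k; rewrite -(ler_nat rat) -subr_ge0.
  by rewrite (diffE _ (dual_coord_fun k)); apply: mulr_ge0 (Az k); rewrite ler0z ltW.
have := dual_le_shift hphi abqr; rewrite -subr_ge0 diffE //.
by rewrite pmulr_rge0 // ltr0z.
Qed.

Hypothesis fgP : fin_gen_monoid P.

Lemma dual_coord_comb phi : dual_cone_elt phi ->
  exists2 lam : 'I_d -> rat, forall k, 0 <= lam k &
    forall x, phi x = \sum_k lam k * coord_fun k x.
Proof.
move=> hphi; have [s hs] := fgP.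
have [lam lam0 elam] := dual_gens_row_cone (fun j : 'I_(size s) => s`_j) hphi.
exists lam => // x.
have phis (j : 'I_(size s)) : phi s`_j = \sum_k lam k * coord_fun k s`_j.
  move/matrixP: elam => /(_ 0 j); rewrite mxE => ->.
  by rewrite summxE; apply: eq_bigr => k _; rewrite !mxE.
have [c ->] := hs x.
rewrite dual_sum //; under eq_bigr => j _ do rewrite dual_mulrn // phis mulr_suml.
rewrite exchange_big /=; apply: eq_bigr => k _.
rewrite dual_sum ?mulr_sumr; last exact: dual_coord_fun.
by apply: eq_bigr => j _; rewrite dual_mulrn ?mulrA //; exact: dual_coord_fun.
Qed.

Lemma extremal_coord_ray phi : extremal_dual phi -> exists k, same_ray phi (coord_fun k).
Proof.
move=> [hphi [x0 phix0] ext].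
have [lam lam0 elam] := dual_coord_comb hphi.
have [k lamk] : exists k, lam k * coord_fun k x0 != 0.
  apply: contrapT => hn; move: phix0; rewrite elam big1 ?eqxx // => k _.
  by apply: contrapT => /eqP lamk; apply: hn; exists k.
pose psi2 x := \sum_(l | l != k) lam l * coord_fun l x.
have hpsi1 := dual_scale (lam0 k) (dual_coord_fun k).
have hpsi2 : dual_cone_elt psi2.
  split => [|a b|a]; rewrite /psi2.
  - by rewrite big1 // => l _; rewrite /coord_fun icoord0 mulr0.
  - by rewrite -big_split; apply: eq_bigr => l _; rewrite /coord_fun icoordD natrD mulrDr.
  - by apply: sumr_ge0 => l _; rewrite mulr_ge0 ?ler0n.
have [r [r0 hr]] := ext _ _ hpsi1 hpsi2 (fun x => etrans (elam x) (bigD1 k isT)).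
have rnz : r != 0 by apply: contraNneq lamk => r0'; rewrite [_ * _](hr x0) r0' mul0r.
have lnz : lam k != 0 by apply: contraNneq lamk => ->; rewrite mul0r.
exists k, (lam k / r); split; first by rewrite divr_gt0 // lt_def ?rnz ?lnz ?lam0.
by move=> x; rewrite -(mulKf rnz (phi x)) -(hr x) mulrCA mulrA.
Qed.

Hypothesis rays : num_dual_rays P d.

Lemma coord_fun_rays :
  (forall k, extremal_dual (coord_fun k)) /\
  (forall k l, same_ray (coord_fun k) (coord_fun l) -> k = l).
Proof.
have [phis [phis_ext phis_inj _]] := rays.
have [rho hrho] := fin_all_exists (fun r => extremal_coord_ray (phis_ext r)).
have rho_inj : injective rho.
  move=> r r' rr'; apply: phis_inj; apply: same_ray_trans (hrho r) _.
  by rewrite rr'; exact: same_ray_sym.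
have [rinv rhoK rinvK] := injF_bij rho_inj.
have hk k : same_ray (coord_fun k) (phis (rinv k)).
  by apply: same_ray_sym; have := hrho (rinv k); rewrite rinvK.
split => [k|k l hkl]; first exact: extremal_dual_same_ray (phis_ext _) (hk k).
apply: (can_inj rinvK); apply: phis_inj.
exact: same_ray_trans (same_ray_sym (hk k)) (same_ray_trans hkl (hk l)).
Qed.

(** * The quotient by a face *)

Section FaceQuotient.
Variables (P0 : P -> Prop) (hP0 : is_face P0).
Local Notation F0 := (face_gen (mimage i P0)).

Lemma face_gen_image_face : is_face F0.
Proof. exact: face_gen_face. Qed.

Lemma face_gen_image p : P0 p -> F0 (i p).
Proof. by move=> P0p; apply: face_gen_sub; exists p. Qed.

Definition face_supp := [set k | `[< exists p, P0 p /\ (0 < icoord k p)%N >]].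
Local Notation S := face_supp.

Lemma mem_face_supp k : k \in S <-> exists p, P0 p /\ (0 < icoord k p)%N.
Proof. by rewrite inE; split => /asboolP. Qed.

Lemma icoord_face_supp k p : k \notin S -> P0 p -> icoord k p = 0%N.
Proof.
move=> kS P0p; apply/eqP; rewrite -leqn0 leqNgt; apply: contra kS => pk.
by apply/mem_face_supp; exists p.
Qed.

Lemma face_gen_imageP y : F0 y <-> forall k, k \notin S -> fcoord he y k = 0%N.
Proof.
split => [F0y|y0].
  apply: (F0y (fun y => forall k, k \notin S -> fcoord he y k = 0%N)).
    split; first split.
    - by move=> k _; rewrite fcoord0.
    - by move=> a b ha hb k kS; rewrite fcoordD ha ?hb.
    - move=> a b hab; split => k kS; move/eqP: (hab k kS);
      by rewrite fcoordD addn_eq0 => /andP [/eqP ? /eqP ?].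
  by move=> _ [p P0p ->] k kS; exact: icoord_face_supp.
(* Each [e k] with [k] in [S] is a summand of some [i p] with [p] in [P0]. *)
rewrite (fcoordE he y); apply: submonoid_sum face_gen_image_face.1 _ => k _.
have [kS|/y0 ->] := boolP (k \in S); last by rewrite mulr0n; case: face_gen_image_face => -[].
apply: submonoid_mulrn face_gen_image_face.1 _.
have [p [P0p pk]] := (mem_face_supp k).1 kS.
have : F0 (e k + \sum_l e l *+ (fcoord he (i p) l - fcoord he (e k) l)%N).
  rewrite -fcoord_le_decomp; first exact: face_gen_image.
  by move=> l; rewrite fcoord_basis; case: eqP => // ->.
by case/face_gen_image_face.2.
Qed.

Lemma qpi_face_gen_imageP y y' :
  qpi F0 y = qpi F0 y' <-> forall k, k \notin S -> fcoord he y k = fcoord he y' k.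
Proof.
rewrite qpi_eqP; last exact: face_gen_image_face.1.
split => [[h1 [h2 [F0h1 F0h2 /(congr1 (fcoord he ^~ _)) yy']]] k kS|yy'].
  move: (yy' k); rewrite !fcoordD.
  by rewrite ((face_gen_imageP _).1 F0h1 k kS) ((face_gen_imageP _).1 F0h2 k kS) !addn0.
pose restr z := \sum_k e k *+ (if k \in S then fcoord he z k else 0%N).
have F0restr z : F0 (restr z).
  by apply/face_gen_imageP => k kS; rewrite fcoord_comb (negbTE kS).
exists (restr y'), (restr y); split => //.
apply: (fcoord_inj (he := he)) => k; rewrite !fcoordD !fcoord_comb.
by case: ifPn => [_|/yy' ->]; [exact: addnC | rewrite !addn0].
Qed.

Local Notation qmap := (quot_map i P0 F0).

Lemma qpi_image_morph : monoid_morph (fun p => qpi F0 (i p)).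
Proof. exact: monoid_morph_comp imorph (qpi_morph F0). Qed.

Lemma qpi_image_face0 p : P0 p -> qpi F0 (i p) = 0.
Proof. by move=> P0p; apply: qpi_null (face_gen_image P0p); case: face_gen_image_face. Qed.

Lemma quot_map_qpi a : qmap (qpi P0 a) = qpi F0 (i a).
Proof. exact (descent_qpi hP0.1 qpi_image_morph qpi_image_face0 a). Qed.

Lemma quot_map_morph : monoid_morph qmap.
Proof. exact (descent_morph hP0.1 qpi_image_morph qpi_image_face0). Qed.

Lemma face_supp_witness : exists2 h, P0 h & forall k, k \in S -> (0 < icoord k h)%N.
Proof.
have wit k : exists p, P0 p /\ (k \in S -> 0 < icoord k p)%N.
  have [/mem_face_supp [p [P0p pk]]|kS] := boolP (k \in S); first by exists p.
  by exists 0; split => //; case: hP0.1.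
have [p hp] := fin_all_exists wit.
exists (\sum_k p k); first by apply: submonoid_sum hP0.1 _ => k _; case: (hp k).
move=> k kS; rewrite icoord_sum (bigD1 k) //=; apply: ltn_addr.
by case: (hp k) => _; apply.
Qed.

Lemma quot_map_exact : exact_morph qmap.
Proof.
move=> x y [q [r]].
have [a ->] := qpi_surj x; have [b ->] := qpi_surj y.
have [q' ->] := qpi_surj q; have [r' ->] := qpi_surj r.
rewrite !quot_map_qpi -(qpiD _ (i b)) -!qpiD => /qpi_face_gen_imageP ab.
have ba_out k : k \notin S -> (icoord k b <= icoord k a)%N.
  by move=> kS; move: (ab k kS); rewrite /icoord !fcoordD => /addIn ->; exact: leq_addr.
have [h P0h hpos] := face_supp_witness.
pose a' := a + h *+ (\sum_k icoord k b).
have [|p [r'' ap]] := exact_icoord_le (a := a') (b := b).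
  move=> k; rewrite icoordD icoordMn.
  have [kS|/ba_out kb] := boolP (k \in S); last exact: leq_trans kb (leq_addr _ _).
  apply: leq_trans (leq_addl _ _) ; apply: leq_trans (leq_pmull _ (hpos k kS)).
  by rewrite (bigD1 k) //= leq_addr.
exists (qpi P0 p), (qpi P0 r'').
have -> : qpi P0 a = qpi P0 a'.
  by rewrite qpiD (qpi_null hP0.1 (submonoid_mulrn _ hP0.1 P0h)) addr0.
by rewrite -(qpiD _ b) -!qpiD ap.
Qed.

Definition cosupp_idx (j : 'I_#|~: S|) : 'I_d := enum_val j.

Lemma cosupp_idxP j : cosupp_idx j \notin S.
Proof. by have := enum_valP j; rewrite inE. Qed.

Lemma cosupp_idx_inj : injective cosupp_idx.
Proof. exact: enum_val_inj. Qed.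

Lemma cosupp_idx_onto k : k \notin S -> exists j, k = cosupp_idx j.
Proof.
move=> kS; have kS' : k \in ~: S by rewrite inE.
by exists (enum_rank_in kS' k); rewrite /cosupp_idx enum_rankK_in.
Qed.

Lemma fcoord_cosupp_comb (c : 'I_#|~: S| -> nat) j :
  fcoord he (\sum_j' e (cosupp_idx j') *+ c j') (cosupp_idx j) = c j.
Proof.
rewrite fcoord_sum (bigD1 j) //= fcoordMn fcoord_basis eqxx mul1n big1 ?addn0 //.
move=> j' j'j; rewrite fcoordMn fcoord_basis (inj_eq cosupp_idx_inj).
by rewrite eq_sym (negbTE j'j).
Qed.

Lemma quot_free : free_of_rank (quotM F0) #|~: S|.
Proof.
exists (fun j => qpi F0 (e (cosupp_idx j))); split.
  move=> x; have [y ->] := qpi_surj x; exists (fun j => fcoord he y (cosupp_idx j)).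
  under eq_bigr => j _ do rewrite -qpiMn.
  rewrite -qpi_sum; apply/qpi_face_gen_imageP => k /cosupp_idx_onto [j ->].
  by rewrite fcoord_cosupp_comb.
move=> c c' cc' j.
have /qpi_face_gen_imageP/(_ _ (cosupp_idxP j)) :
    qpi F0 (\sum_j' e (cosupp_idx j') *+ c j') = qpi F0 (\sum_j' e (cosupp_idx j') *+ c' j').
  rewrite !qpi_sum; under [LHS]eq_bigr do rewrite qpiMn.
  by under [RHS]eq_bigr do rewrite qpiMn.
by rewrite !fcoord_cosupp_comb.
Qed.

Lemma coord_fun_face j h : P0 h -> coord_fun (cosupp_idx j) h = 0.
Proof. by move=> P0h; rewrite /coord_fun icoord_face_supp ?cosupp_idxP. Qed.

Definition quot_coord_fun j (x : quotM P0) : rat := coord_fun (cosupp_idx j) (repr x).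

Lemma quot_coord_fun_qpi j a : quot_coord_fun j (qpi P0 a) = coord_fun (cosupp_idx j) a.
Proof. exact (descent_qpi hP0.1 (dual_morph (dual_coord_fun _)) (@coord_fun_face j) a). Qed.

Lemma quot_rays : num_dual_rays (quotM P0) #|~: S|.
Proof.
have [coord_ext coord_inj] := coord_fun_rays.
exists quot_coord_fun; split.
- move=> j; exact (extremal_dual_descent hP0.1 (coord_ext _) (@coord_fun_face j)).
- move=> j j' [r [r0 jj']]; apply: cosupp_idx_inj; apply: coord_inj.
  by exists r; split => // a; move: (jj' (qpi P0 a)); rewrite !quot_coord_fun_qpi.
move=> psi psi_ext; have [hpsi _ _] := psi_ext.
have [k [r [r0 psik]]] := extremal_coord_ray (extremal_dual_qpi hP0.1 psi_ext).
have kS : k \notin S.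
  apply/negP => /mem_face_supp [p [P0p pk]].
  move: (psik p); rewrite (qpi_null hP0.1 P0p) (dual_morph hpsi).1 => /esym/eqP.
  by rewrite mulf_eq0 gt_eqF //= pnatr_eq0 eqn0Ngt pk.
have [j kj] := cosupp_idx_onto kS.
by exists j, r; split => // y; have [a ->] := qpi_surj y; rewrite quot_coord_fun_qpi -kj psik.
Qed.

Section Extension.
Variables (F' : nmodType) (i' : quotM P0 -> F').
Hypotheses (F'free : free_of_rank F' #|~: S|) (i'morph : monoid_morph i')
  (i'exact : exact_morph i').
Local Notation G := (F' * {ffun 'I_#|S| -> nat})%type.

Definition supp_coords (y : F) : {ffun 'I_#|S| -> nat} := [ffun l => fcoord he y (enum_val l)].

Definition ext_res (x : P) : G := (i' (qpi P0 x), supp_coords (i x)).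

Lemma ext_res_free : free_of_rank G d.
Proof. by have := free_of_rank_prod #|S| F'free; rewrite addnC cardsC card_ord. Qed.

Lemma supp_coords_morph : monoid_morph supp_coords.
Proof. exact: fcoord_ffun_morph. Qed.

Lemma ext_res_morph : monoid_morph ext_res.
Proof.
apply: monoid_morph_pair; first exact: monoid_morph_comp (qpi_morph P0) i'morph.
exact: monoid_morph_comp imorph supp_coords_morph.
Qed.

Lemma ext_res_exact : exact_morph ext_res.
Proof.
move=> a b [q [r abqr]].
have [|pq [rq]] := i'exact (a := qpi P0 a) (b := qpi P0 b).
  by exists q.1, r.1; move/(congr1 fst): abqr.
have [p ->] := qpi_surj pq; have [r' ->] := qpi_surj rq.
rewrite -(qpiD _ b) -!qpiD => /(qpi_eqP hP0.1) [h1 [h2 [P0h1 P0h2 abpr]]].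
apply: exact_icoord_le => k; have [kS|kS] := boolP (k \in S).
  move/(congr1 (fun g : G => g.2 (enum_rank_in kS k))): abqr.
  by rewrite /= !ffunE enum_rankK_in // /icoord => /addIn ->; exact: leq_addr.
move/(congr1 (icoord k)): abpr.
rewrite !icoordD (icoord_face_supp kS P0h1) (icoord_face_supp kS P0h2) !addn0.
by move=> /addIn ->; exact: leq_addr.
Qed.

End Extension.

Hypothesis iuniv : universal_exact i d.

Lemma quot_map_universal : universal_exact qmap #|~: S|.
Proof.
move=> F' i' F'free i'morph i'exact.
have [j [jmorph ij juniq]] :=
  iuniv (ext_res_free F'free) (ext_res_morph i'morph) (ext_res_exact i'exact).
have [e' he'] := F'free.
have fst_j_morph : monoid_morph (fun y => (j y).1).
  by split => [|a b]; rewrite ?jmorph.1 ?jmorph.2.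
have fst_j_F0 y : F0 y -> (j y).1 = 0.
  move=> F0y; apply: F0y (kernel_face (free_sharp he') fst_j_morph) _ => _ [p P0p ->].
  by rewrite -ij /= (qpi_null hP0.1 P0p) i'morph.1.
have desc := descent_qpi face_gen_image_face.1 fst_j_morph fst_j_F0.
exists (fun x => (j (repr x)).1); split.
- exact (descent_morph face_gen_image_face.1 fst_j_morph fst_j_F0).
- by move=> x; have [a ->] := qpi_surj x; rewrite quot_map_qpi desc -ij.
move=> j' j'morph ij' y; have [z ->] := qpi_surj y.
pose jext z := (j' (qpi F0 z), supp_coords z).
have jext_morph : monoid_morph jext.
  exact: monoid_morph_pair (monoid_morph_comp (qpi_morph F0) j'morph) supp_coords_morph.
have ijext x : ext_res i' x = jext (i x) by rewrite /ext_res /jext -quot_map_qpi -ij'.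
by rewrite desc -(juniq jext jext_morph ijext z).
Qed.

End FaceQuotient.
End ExactFreeResolution.

Theorem proposition2p6 (P F : nmodType) (i : P -> F)
  (hP : saturated_toric_sharp P) (hi : min_free_res i)
  (P0 : P -> Prop) (hP0 : is_face P0) :
  min_free_res (quot_map i P0 (face_gen (mimage i P0))).
Proof.
have [fgP _ _ _ _] := hP.
have [d [rays [e he] imorph iexact iuniv]] := hi.
have {}he : free_basis e := he.
exists #|~: face_supp i he P0|; split.
- exact (quot_rays he imorph iexact fgP rays hP0).
- exact (quot_free i he P0).
- exact (quot_map_morph imorph hP0).
- exact (quot_map_exact he imorph iexact hP0).
- exact (quot_map_universal imorph iexact hP0 iuniv).
Qed.
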